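(* Let $y_0,z_0\in\mathbb{R}^n$ be row vectors with $y_0[i]\ge0$, $z_0[i]\ge0$ for $i\in\mathcal{V}$, $y_0[(i,j)]=z_0[(i,j)]=0$ for $(i,j)\in\mathcal{E}$, and $\sum_j z_0[j]>0$, and define $y_k=y_{k-1}M_k$, $z_k=z_{k-1}M_k$ for $k\ge1$ (same $M_k$ in both). Let $\mu_z$ satisfy $0<\mu_z\le\sum_j z_0[j]$, let $c=\min\{M[a,b]: M\in\mathcal{M},\,M[a,b]>0\}$, let $l$ be a positive integer such that for every $i\in\mathcal{V}$ there exist $l$ matrices in $\mathcal{M}$ (possibly repeated) whose product, in some order, has all entries of its column indexed by $i$ strictly positive, and set $\mu=\mu_z c^l/n$. For $i\in\mathcal{V}$, let $\tau_i^1<\tau_i^2<\cdots$ be the successive times $k$ at which $z_k[i]\ge\mu$, and let $\pi_i[t]=y_{\tau_i^t}[i]/z_{\tau_i^t}[i]$. Then for each $i\in\mathcal{V}$, with probability $1$, $\pi_i[t]$ converges as $t\to\infty$ to $\pi^*=\dfrac{\sum_j y_0[j]}{\sum_j z_0[j]}$.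
   Context: Let $\mathcal{G}=(\mathcal{V},\mathcal{E})$ be a strongly connected directed graph with $\mathcal{V}=\{1,\dots,m\}$, with a self-loop $(i,i)\in\mathcal{E}$ at every node. Let $\mathcal{O}_i=\{j:(i,j)\in\mathcal{E}\}$ and $D_i=|\mathcal{O}_i|$. At each time step $k\ge1$ each link $(i,j)\in\mathcal{E}$ is reliable with probability $q_{ij}\in(0,1]$, independently across links and across time steps; let $X_k[i,j]=1$ if $(i,j)$ is reliable at step $k$ and $0$ otherwise. Let $n=m+|\mathcal{E}|$ and index vector entries and rows/columns of $n\times n$ matrices by $\mathcal{V}\cup\mathcal{E}$ (each link $(i,j)$ is an additional ''virtual buffer'' index). The random matrix $M_k$ is defined by: for $i\in\mathcal{V}$ and $(i,j)\in\mathcal{E}$, $M_k[i,j]=X_k[i,j]/D_i$ and $M_k[i,(i,j)]=(1-X_k[i,j])/D_i$, all other entries of row $i$ being $0$; for $(i,j)\in\mathcal{E}$, $M_k[(i,j),j]=X_k[i,j]$ and $M_k[(i,j),(i,j)]=1-X_k[i,j]$, all other entries of row $(i,j)$ being $0$. $\mathcal{M}$ denotes the finite set of all $2^{|\mathcal{E}|}$ matrices obtainable this way. The sums $\sum_j$ over $y_0,z_0$ range over all $n$ indices (equivalently over $\mathcal{V}$). The times $\tau_i^t$ are well defined (infinitely many) with probability $1$. *)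

From HB Require Import structures.
From mathcomp Require Import all_boot all_order all_algebra.
From mathcomp Require Import all_classical all_reals all_analysis.
Set Implicit Arguments. Unset Strict Implicit. Unset Printing Implicit Defensive.
Import Order.TTheory GRing.Theory Num.Theory.
Import numFieldNormedType.Exports.
Local Open Scope classical_set_scope.
Local Open Scope ring_scope.

(* Virtual buffers: one per link. *)
Definition edge (m : nat) (E : {set 'I_m * 'I_m}) := {p : 'I_m * 'I_m | p \in E}.
(* Index set V u E of the n = m + |E| coordinates. *)
Definition idx (m : nat) (E : {set 'I_m * 'I_m}) := ('I_m + edge E)%type.

Definition outdeg (m : nat) (E : {set 'I_m * 'I_m}) (i : 'I_m) : nat :=
  #|[set j | (i, j) \in E]|.

(* The matrix M determined by the reliability indicators x (only the values
   of x on links matter). *)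
Definition Mof (R : realType) (m : nat) (E : {set 'I_m * 'I_m})
    (x : 'I_m * 'I_m -> bool) (a b : idx E) : R :=
  match a, b with
  | inl i, inl j => if (i, j) \in E then (x (i, j))%:R / (outdeg E i)%:R else 0
  | inl i, inr e => if (val e).1 == i
                    then (1 - (x (val e))%:R) / (outdeg E i)%:R else 0
  | inr e, inl j => if (val e).2 == j then (x (val e))%:R else 0
  | inr e, inr e' => if e == e' then 1 - (x (val e))%:R else 0
  end.

Definition inMset (R : realType) (m : nat) (E : {set 'I_m * 'I_m})
    (A : idx E -> idx E -> R) : Prop :=
  exists x : 'I_m * 'I_m -> bool, A = Mof R x.

Definition vmul (R : realType) (I : finType) (y : I -> R) (A : I -> I -> R) : I -> R :=
  fun b => \sum_a y a * A a b.
Definition mmul (R : realType) (I : finType) (A B : I -> I -> R) : I -> I -> R :=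
  fun a b => \sum_k A a k * B k b.
Definition mid (R : realType) (I : finType) : I -> I -> R := fun a b => (a == b)%:R.
Definition mprod (R : realType) (I : finType) (s : seq (I -> I -> R)) : I -> I -> R :=
  foldr (@mmul R I) (@mid R I) s.

Fixpoint traj (R : realType) (m : nat) (E : {set 'I_m * 'I_m})
    (x : nat -> 'I_m * 'I_m -> bool) (v0 : idx E -> R) (k : nat) : idx E -> R :=
  match k with
  | 0 => v0
  | k'.+1 => vmul (traj x v0 k') (Mof R (x k'.+1))
  end.

(* Successive hitting times of a boolean sequence s:
   tau s 0 < tau s 1 < ... are the successive k with s k (when they exist). *)
Definition next_hit (s : nat -> bool) (k0 : nat) : nat :=
  match pselect (exists k, (k0 <= k)%N && s k) with
  | left h => ex_minn h
  | right _ => k0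
  end.
Fixpoint tau (s : nat -> bool) (t : nat) : nat :=
  match t with
  | 0 => next_hit s 0
  | t'.+1 => next_hit s (tau s t').+1
  end.

Definition mutually_independent (R : realType) (d : measure_display)
    (T : measurableType d) (P : probability T R) (I : eqType)
    (J : set I) (Y : I -> T -> bool) : Prop :=
  forall (s : seq I) (b : I -> bool), uniq s -> (forall i, i \in s -> J i) ->
    P (\bigcap_(i in [set` s]) [set w | Y i w = b i]) =
    ((\prod_(i <- s) fine (P [set w | Y i w = b i]))%:E)%E.

From HB Require Import structures.
From mathcomp Require Import all_boot all_order all_algebra.
From mathcomp Require Import all_classical all_reals all_analysis.
From mathcomp Require Import ring lra zify.
Import Order.TTheory GRing.Theory Num.Theory.
Import numFieldNormedType.Exports.
Local Open Scope classical_set_scope.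
Local Open Scope ring_scope.

Set Implicit Arguments. Unset Strict Implicit. Unset Printing Implicit Defensive.

(* Let W be the product of l copies of the matrix of a step in which every
   link is reliable.  A positive entry of any matrix of \mathcal{M} is matched
   by a positive path of that all-reliable matrix (self-loops let shorter
   paths wait), so the hypothesis on l makes column i of W entrywise at least
   c^l.  Hence after any block of l consecutive all-reliable steps,
   z[i] >= c^l \sum z0 >= mu, and the l1 norm of u = y - pi* z, whose entries
   sum to 0, shrinks by the factor 1 - c^l; it never grows, since all the M_k
   are row-stochastic.  Disjoint blocks are independent events of the same
   positive probability, so almost surely infinitely many of them are
   all-reliable.  Then every tau_i^t exists, |u_k| -> 0, and
   |pi_i[t] - pi*| <= |u_(tau_i^t)| / mu -> 0. *)

Definition inf_often (s : nat -> Prop) := forall K, exists k, (K <= k)%N /\ s k.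

Lemma expr_lt_eventually (R : realType) (a r : R) :
  0 <= a < 1 -> 0 < r -> exists N, a ^+ N < r.
Proof.
move=> /andP[a_ge0 a_lt1] r_gt0.
have /cvgrPdist_lt/(_ r r_gt0) [N _ hN] := @cvg_expr _ a ltac:(by rewrite ger0_norm).
by exists N; have := hN N (leqnn N); rewrite sub0r normrN ger0_norm ?exprn_ge0.
Qed.

Lemma prodr_const_seq (R : pzSemiRingType) (I : Type) (r : seq I) (x : R) :
  \prod_(i <- r) x = x ^+ size r.
Proof. by elim: r => [|i r IH]; rewrite ?big_nil ?big_cons ?IH ?exprS. Qed.

Section StochasticMatrices.
Variables (R : realType) (I : finType).
Implicit Types (A B : I -> I -> R) (v w : I -> R).

Definition mx_nonneg A := forall a b, 0 <= A a b.
Definition mx_rowsum A r := forall a, \sum_b A a b = r.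
Definition stochastic A := mx_nonneg A /\ mx_rowsum A 1.
Definition norm1 v := \sum_a `|v a|.

Lemma ler_sum_term (F : I -> R) b : (forall a, 0 <= F a) -> F b <= \sum_a F a.
Proof. by move=> F_ge0; rewrite (bigD1 b) //= lerDl sumr_ge0. Qed.

Lemma norm1_ge0 v : 0 <= norm1 v.
Proof. exact: sumr_ge0. Qed.

Lemma sum_vmul A v : mx_rowsum A 1 -> \sum_b vmul v A b = \sum_a v a.
Proof.
move=> hA; rewrite /vmul exchange_big /=; apply: eq_bigr => a _.
by rewrite -mulr_sumr hA mulr1.
Qed.

Lemma vmul_ge0 A v b : mx_nonneg A -> (forall a, 0 <= v a) -> 0 <= vmul v A b.
Proof. by move=> hA hv; apply: sumr_ge0 => a _; apply: mulr_ge0. Qed.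

Lemma norm1_vmul_le A v r :
  mx_nonneg A -> mx_rowsum A r -> norm1 (vmul v A) <= r * norm1 v.
Proof.
move=> hA hr; apply: (@le_trans _ _ (\sum_b \sum_a `|v a| * A a b)).
  apply: ler_sum => b _; apply: (le_trans (ler_norm_sum _ _ _)).
  by apply: ler_sum => a _; rewrite normrM (ger0_norm (hA a b)).
rewrite exchange_big /= /norm1 mulr_sumr; apply: ler_sum => a _.
by rewrite -mulr_sumr hr mulrC.
Qed.

(* Since the entries of v sum to 0, subtracting g from column i0 of A does not
   change vA and leaves a nonnegative matrix with row sums 1 - g. *)
Lemma norm1_vmul_contract A v i0 g :
  stochastic A -> (forall a, g <= A a i0) -> \sum_a v a = 0 ->
  norm1 (vmul v A) <= (1 - g) * norm1 v.
Proof.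
move=> [hA hr] hg hv.
pose A' a b := A a b - g * (b == i0)%:R.
have -> : vmul v A = vmul v A'.
  apply: funext => b; rewrite /vmul /A'.
  under [RHS]eq_bigr do rewrite mulrBr.
  by rewrite sumrB -mulr_suml hv mul0r subr0.
apply: norm1_vmul_le => [a b|a].
  by rewrite /A' subr_ge0; case: eqP => [->|_]; rewrite ?mulr1 ?mulr0.
rewrite /A' sumrB hr (bigD1 i0) //= eqxx mulr1 big1 ?addr0 // => b /negbTE ->.
by rewrite mulr0.
Qed.

Lemma vmulBl A v w k :
  vmul (fun a => v a - k * w a) A = (fun b => vmul v A b - k * vmul w A b).
Proof.
apply: funext => b; rewrite /vmul mulr_sumr -sumrB; apply: eq_bigr => a _.
by rewrite mulrBl mulrA.
Qed.

Lemma vmul_mmul A B v : vmul v (mmul A B) = vmul (vmul v A) B.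
Proof.
apply: funext => b; rewrite /vmul /mmul.
under eq_bigr do rewrite mulr_sumr.
rewrite exchange_big /=; apply: eq_bigr => k _.
by rewrite mulr_suml; apply: eq_bigr => a _; rewrite mulrA.
Qed.

Lemma vmul_mid v : vmul v (@mid R I) = v.
Proof.
apply: funext => b; rewrite /vmul /mid (bigD1 b) //= eqxx mulr1.
by rewrite big1 ?addr0 // => a /negbTE ->; rewrite mulr0.
Qed.

Lemma mmulA A B (C : I -> I -> R) : mmul A (mmul B C) = mmul (mmul A B) C.
Proof.
apply: funext => a; apply: funext => b; rewrite /mmul.
under eq_bigr do rewrite mulr_sumr.
rewrite exchange_big /=; apply: eq_bigr => k _.
by rewrite mulr_suml; apply: eq_bigr => j _; rewrite mulrA.
Qed.

Lemma mmul1m A : mmul (@mid R I) A = A.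
Proof.
apply: funext => a; apply: funext => b; rewrite /mmul /mid (bigD1 a) //= eqxx mul1r.
by rewrite big1 ?addr0 // => k /negbTE; rewrite eq_sym => ->; rewrite mul0r.
Qed.

Lemma mmulm1 A : mmul A (@mid R I) = A.
Proof.
apply: funext => a; apply: funext => b; rewrite /mmul /mid (bigD1 b) //= eqxx mulr1.
by rewrite big1 ?addr0 // => k /negbTE ->; rewrite mulr0.
Qed.

Lemma mprod_nseqS A n : mprod (nseq n.+1 A) = mmul (mprod (nseq n A)) A.
Proof.
elim: n => [|n IH] /=; first by rewrite mmul1m mmulm1.
by rewrite -mmulA -IH.
Qed.

Lemma mmul_nonneg A B : mx_nonneg A -> mx_nonneg B -> mx_nonneg (mmul A B).
Proof. by move=> hA hB a b; apply: sumr_ge0 => k _; apply: mulr_ge0. Qed.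

Lemma mprod_nonneg s : (forall A, A \in s -> mx_nonneg A) -> mx_nonneg (mprod s).
Proof.
elim: s => [_ a b|A s IH hs] /=; first by rewrite /mid ler0n.
apply: mmul_nonneg; first by apply: hs; rewrite mem_head.
by apply: IH => B hB; apply: hs; rewrite inE hB orbT.
Qed.

Lemma stochastic_mprod s : (forall A, A \in s -> stochastic A) -> stochastic (mprod s).
Proof.
move=> hs; split; first by apply: mprod_nonneg => A /hs [].
elim: s hs => [_ a|A s IH hs a] /=.
  by rewrite /mid (bigD1 a) //= eqxx big1 ?addr0 // => b /negbTE; rewrite eq_sym => ->.
have [_ hA] := hs A (mem_head _ _).
have hsum := IH (fun B hB => hs B ltac:(by rewrite inE hB orbT)).
rewrite /mmul exchange_big /=.
under eq_bigr do rewrite -mulr_sumr hsum mulr1.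
exact: hA.
Qed.

Lemma mmul_gt0P A B a b : mx_nonneg A -> mx_nonneg B ->
  0 < mmul A B a b -> exists k, 0 < A a k /\ 0 < B k b.
Proof.
move=> hA hB; apply: contraPP => /forallNP hn; apply/negP; rewrite -leNgt.
apply: sumr_le0 => k _; have [Aak_gt0|Aak_le0] := ltP 0 (A a k).
  have [Bkb_gt0|Bkb_le0] := ltP 0 (B k b); last by rewrite pmulr_rle0.
  by exfalso; apply: (hn k).
have -> : A a k = 0 by apply/eqP; rewrite eq_le Aak_le0 hA.
by rewrite mul0r.
Qed.

Lemma mmul_ge_term A B a b k :
  mx_nonneg A -> mx_nonneg B -> A a k * B k b <= mmul A B a b.
Proof. by move=> hA hB; apply: ler_sum_term => j; apply: mulr_ge0. Qed.

Lemma mmul_gt0 A B a b k : mx_nonneg A -> mx_nonneg B ->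
  0 < A a k -> 0 < B k b -> 0 < mmul A B a b.
Proof.
move=> hA hB Aak Bkb; apply: lt_le_trans (mmul_ge_term a b k hA hB).
exact: mulr_gt0.
Qed.

Lemma mprod_ge_expr s c : 0 < c ->
  (forall A, A \in s -> mx_nonneg A /\ forall a b, 0 < A a b -> c <= A a b) ->
  forall a b, 0 < mprod s a b -> c ^+ size s <= mprod s a b.
Proof.
move=> c_gt0; elim: s => [_ a b|A s IH hs a b] /=.
  by rewrite /mid expr0; case: (a == b); rewrite ?ltxx.
have [hA Ac] := hs A (mem_head _ _).
have hs' B : B \in s -> mx_nonneg B /\ forall a b, 0 < B a b -> c <= B a b.
  by move=> hB; apply: hs; rewrite inE hB orbT.
have hP : mx_nonneg (mprod s) by apply: mprod_nonneg => B /hs' [].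
move=> /(mmul_gt0P hA hP) [k [Aak Pkb]].
apply: le_trans (mmul_ge_term a b k hA hP).
by rewrite exprS ler_pM ?exprn_ge0 ?(ltW c_gt0) // ?Ac // IH.
Qed.

End StochasticMatrices.

Section LinkMatrices.
Variables (R : realType) (m : nat) (E : {set 'I_m * 'I_m}).
Hypothesis self_loop : forall i, (i, i) \in E.

Lemma outdegE i : outdeg E i = #|[pred j | (i, j) \in E]|.
Proof. by apply: eq_card => j; rewrite inE; apply/idP/idP; rewrite in_setE. Qed.

Lemma outdeg_gt0 i j : (i, j) \in E -> (0 < outdeg E i)%N.
Proof. by move=> h; rewrite outdegE; apply/card_gt0P; exists j; rewrite inE. Qed.

Lemma Mof_ge0 x : mx_nonneg (Mof R (E:=E) x).
Proof.
case=> [i|e] [j|e'] /=; rewrite /Mof; repeat case: ifP => _; rewrite ?lexx //;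
  try apply: divr_ge0; rewrite ?ler0n ?subr_ge0 //; by case: (x _).
Qed.

Lemma Mof_rowsum1 x : mx_rowsum (Mof R (E:=E) x) 1.
Proof.
move=> a; rewrite big_sumType /=; case: a => [i|e] /=; last first.
  rewrite (bigD1 (val e).2) //= eqxx [X in _ + X + _]big1; last first.
    by move=> j /negbTE h; rewrite eq_sym h.
  rewrite addr0 (bigD1 e) //= eqxx big1 ?addr0 ?subrKC // => e' /negbTE h.
  by rewrite eq_sym h.
(* Each link (i, j) contributes x/D_i to node j and (1 - x)/D_i to its buffer. *)
pose F (p : 'I_m * 'I_m) :=
  if p.1 == i then (1 - (x p)%:R) / (outdeg E i)%:R else 0 : R.
have -> : \sum_(e : edge E) Mof R x (inl i) (inr e) = \sum_(p in E) F p.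
  by rewrite [RHS]big_sub.
rewrite [X in _ + X]big_mkcond /=.
rewrite (_ : \sum_(p : 'I_m * 'I_m) _ =
    \sum_(a < m) \sum_(j < m) (if (a, j) \in E then F (a, j) else 0)); last first.
  by rewrite pair_bigA; apply: eq_bigr => -[].
rewrite [X in _ + X](bigD1 i) //= [X in _ + (_ + X)]big1 ?addr0; last first.
  by move=> a /negbTE ai; apply: big1 => j _; rewrite /F /= ai; case: ifP.
have D_neq0 : (outdeg E i)%:R != 0 :> R by rewrite pnatr_eq0 -lt0n (outdeg_gt0 (self_loop i)).
rewrite -big_split /= (eq_bigr (fun j => if (i, j) \in E then (outdeg E i)%:R^-1 else 0)).
  rewrite -big_mkcond sumr_const (_ : #|_| = outdeg E i); last first.
    by rewrite outdegE; apply: eq_card.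
  by rewrite -[_^-1 *+ _]mulr_natr mulVf.
move=> j _; rewrite /F /= eqxx; case: ifP => _; last by rewrite addr0.
by rewrite -mulrDl subrKC mul1r.
Qed.

Lemma Mof_stochastic x : stochastic (Mof R (E:=E) x).
Proof. by split; [exact: Mof_ge0 | exact: Mof_rowsum1]. Qed.

Definition Mreliable := Mof R (E:=E) (fun _ => true).

Lemma Mof_reliable (x : 'I_m * 'I_m -> bool) :
  (forall e, e \in E -> x e) -> Mof R x = Mreliable.
Proof.
move=> hx; apply: funext => -[i|e]; apply: funext => -[j|e'] /=; rewrite /Mof.
- by case: ifP => // /hx ->.
- by rewrite hx ?(valP e').
- by rewrite hx ?(valP e).
- by rewrite hx ?(valP e).
Qed.

Lemma Mreliable_link i j : (i, j) \in E -> 0 < Mreliable (inl i) (inl j).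
Proof. by move=> h; rewrite /Mreliable /Mof h mul1r invr_gt0 ltr0n (outdeg_gt0 h). Qed.

Lemma Mreliable_buffer (e : edge E) : 0 < Mreliable (inr e) (inl (val e).2).
Proof. by rewrite /Mreliable /Mof eqxx ltr01. Qed.

Lemma Mreliable_bufferP (e : edge E) b :
  0 < Mreliable (inr e) b -> b = inl (val e).2.
Proof.
case: b => [j|e'] /=; rewrite /Mreliable /Mof.
  by case: eqP => [->|]; rewrite ?ltxx.
by case: eqP => _; rewrite ?subrr ?ltxx.
Qed.

Definition Mpow k := mprod (nseq k Mreliable).

Lemma Mpow_stochastic k : stochastic (Mpow k).
Proof. by apply: stochastic_mprod => A /nseqP [-> _]; exact: Mof_stochastic. Qed.

Let Mpow_ge0 k : mx_nonneg (Mpow k). Proof. exact: (Mpow_stochastic k).1. Qed.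
Let Mreliable_ge0 : mx_nonneg Mreliable. Proof. exact: Mof_ge0. Qed.

(* The self-loop at i lets a positive path into i wait one more step. *)
Lemma Mpow_gt0S i k b : 0 < Mpow k b (inl i) -> 0 < Mpow k.+1 b (inl i).
Proof.
elim: k b => [|k IH] b; rewrite /Mpow /=.
  rewrite /mid; case: eqP => [-> _|]; last by rewrite ltxx.
  by apply: (mmul_gt0 (k := inl i)) => //; rewrite ?Mreliable_link ?eqxx ?ltr01.
move=> /(mmul_gt0P Mreliable_ge0 (Mpow_ge0 k)) [a [ba ai]].
exact: (mmul_gt0 (k := a)) (IH _ ai).
Qed.

Lemma Mof_Mpow_gt0 i k x a b : 0 < Mof R x a b -> 0 < Mpow k b (inl i) ->
  0 < Mpow k.+1 a (inl i).
Proof.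
case: a => [a|e]; case: b => [j|e'] /=; rewrite /Mof.
- case: ifP => [hE _ hj|_]; last by rewrite ltxx.
  exact: (mmul_gt0 (k := inl j)) (Mreliable_link hE) hj.
- case: eqP => [he _|]; last by rewrite ltxx.
  case: k => [|k] /=; first by rewrite /mid ltxx.
  move=> /(mmul_gt0P Mreliable_ge0 (Mpow_ge0 k)) [b [e'b bi]].
  move: e'b bi => /Mreliable_bufferP -> /Mpow_gt0S bi.
  apply: (mmul_gt0 (k := inl (val e').2)) bi => //; apply: Mreliable_link.
  by rewrite -he -surjective_pairing (valP e').
- case: eqP => [<- _ hi|]; last by rewrite ltxx.
  exact: (mmul_gt0 (k := inl (val e).2)) (Mreliable_buffer e) hi.
- by case: eqP => [<- _|]; [exact: Mpow_gt0S | rewrite ltxx].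
Qed.

Lemma mprod_Mpow_gt0 i (s : seq (idx E -> idx E -> R)) :
  (forall A, A \in s -> inMset (E:=E) A) ->
  forall a, 0 < mprod s a (inl i) -> 0 < Mpow (size s) a (inl i).
Proof.
elim: s => [//|A s IH] hs a /=.
have [x ->] := hs A (mem_head _ _).
have hs' B : B \in s -> inMset (E:=E) B by move=> hB; apply: hs; rewrite inE hB orbT.
have hP : mx_nonneg (mprod s) by apply: mprod_nonneg => B /hs' [y ->]; exact: Mof_ge0.
move=> /(mmul_gt0P (Mof_ge0 x) hP) [b [ab bi]].
exact: Mof_Mpow_gt0 ab (IH hs' _ bi).
Qed.

Lemma Mpow_col_ge (c : R) (l : nat) i : 0 < c ->
  (forall x (a b : idx E), 0 < Mof R x a b -> c <= Mof R x a b) ->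
  (exists s : seq (idx E -> idx E -> R), size s = l /\
     (forall A, A \in s -> inMset (E:=E) A) /\ forall a, 0 < mprod s a (inl i)) ->
  forall a, c ^+ l <= Mpow l a (inl i).
Proof.
move=> c_gt0 c_min [s [<- [sM s_pos]]] a.
have := mprod_ge_expr c_gt0 _ (mprod_Mpow_gt0 sM (s_pos a)); rewrite size_nseq.
by apply => A /nseqP [-> _]; split; [exact: Mof_ge0 | exact: c_min].
Qed.

End LinkMatrices.

Section Trajectories.
Variables (R : realType) (m : nat) (E : {set 'I_m * 'I_m}).
Hypothesis self_loop : forall i, (i, i) \in E.
Variable x : nat -> 'I_m * 'I_m -> bool.
Implicit Types v w : idx E -> R.

Lemma traj_sum v k : \sum_b traj x v k b = \sum_a v a.
Proof. by elim: k => [//|k IH] /=; rewrite sum_vmul ?IH //; exact: Mof_rowsum1. Qed.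

Lemma traj_ge0 v k b : (forall a, 0 <= v a) -> 0 <= traj x v k b.
Proof. by move=> hv; elim: k b => [//|k IH] b /=; apply: vmul_ge0 => //; exact: Mof_ge0. Qed.

Lemma trajBl v w r k :
  traj x (fun a => v a - r * w a) k = (fun b => traj x v k b - r * traj x w k b).
Proof. by elim: k => [//|k IH] /=; rewrite IH vmulBl. Qed.

Lemma norm1_traj_le v k k' : (k <= k')%N -> norm1 (traj x v k') <= norm1 (traj x v k).
Proof.
elim: k' => [|k' IH]; first by rewrite leqn0 => /eqP ->.
rewrite leq_eqVlt => /orP[/eqP -> //|/IH]; apply: le_trans.
by rewrite -[leRHS]mul1r; apply: norm1_vmul_le; [exact: Mof_ge0 | exact: Mof_rowsum1].
Qed.

Definition reliable_block (l j : nat) :=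
  forall k, (k < l)%N -> forall e, e \in E -> x (j * l + k).+1 e.

Lemma traj_reliable_window v t n :
  (forall k, (k < n)%N -> forall e, e \in E -> x (t + k).+1 e) ->
  traj x v (t + n) = vmul (traj x v t) (Mpow R n).
Proof.
elim: n => [|n IH] hx; first by rewrite addn0 vmul_mid.
rewrite addnS /Mpow mprod_nseqS vmul_mmul -IH => [|k /ltnW]; last exact: hx.
by rewrite [LHS]/= Mof_reliable //; apply: hx.
Qed.

Lemma traj_reliable_block v l j :
  reliable_block l j -> traj x v (j * l + l) = vmul (traj x v (j * l)) (Mpow R l).
Proof. exact: traj_reliable_window. Qed.

End Trajectories.

Lemma next_hitP (s : nat -> bool) k0 :
  inf_often s -> (k0 <= next_hit s k0)%N /\ s (next_hit s k0).
Proof.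
move=> hs; rewrite /next_hit; case: pselect => [h|h].
  by case: ex_minnP => n /andP[].
by have [k [h1 h2]] := hs k0; case: h; exists k; rewrite h1 h2.
Qed.

Lemma tauP (s : nat -> bool) : inf_often s -> forall t, (t <= tau s t)%N /\ s (tau s t).
Proof.
move=> hs; elim=> [|t [IH _]] /=; first exact: next_hitP.
have [h1 h2] := next_hitP (tau s t).+1 hs; split => //; exact: leq_trans h1.
Qed.

Section RatioConsensus.
Variables (R : realType) (m : nat) (E : {set 'I_m * 'I_m}).
Hypothesis self_loop : forall i, (i, i) \in E.
Variables (x : nat -> 'I_m * 'I_m -> bool) (l : nat) (i : 'I_m) (g : R).
Hypothesis l_gt0 : (0 < l)%N.
Hypothesis blocks : inf_often (reliable_block E x l).
Hypothesis g_gt0 : 0 < g.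
Hypothesis Mpow_col : forall a : idx E, g <= Mpow R l a (inl i).
Implicit Types v : idx E -> R.

Lemma col_bound_le1 : g <= 1.
Proof.
have [W_ge0 W_sum] := Mpow_stochastic R self_loop l.
by rewrite -(W_sum (inl i)); apply: le_trans (Mpow_col (inl i)) (ler_sum_term _ _).
Qed.

Lemma inf_often_traj_col_ge v : (forall a, 0 <= v a) ->
  inf_often (fun k => g * \sum_a v a <= traj x v k (inl i)).
Proof.
move=> v_ge0 K; have [j [Kj hj]] := blocks K.
exists (j * l + l)%N; split.
  exact: leq_trans Kj (leq_trans (leq_pmulr j l_gt0) (leq_addr _ _)).
rewrite traj_reliable_block // -(traj_sum self_loop x v (j * l)) mulr_sumr.
apply: ler_sum => a _; rewrite mulrC; apply: ler_wpM2l; last exact: Mpow_col.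
exact: traj_ge0.
Qed.

Lemma norm1_traj_decay v : \sum_a v a = 0 ->
  forall r, exists K, forall k, (K <= k)%N -> norm1 (traj x v k) <= (1 - g) ^+ r * norm1 v.
Proof.
move=> v_sum.
have contract j : reliable_block E x l j ->
    norm1 (traj x v (j * l + l)) <= (1 - g) * norm1 (traj x v (j * l)).
  move=> hj; rewrite traj_reliable_block //.
  by apply: norm1_vmul_contract (Mpow_stochastic R self_loop l) Mpow_col _; rewrite traj_sum.
elim=> [|r [K hK]].
  by exists 0%N => k _; rewrite mul1r (norm1_traj_le self_loop x v (leq0n k)).
have [j [Kj hj]] := blocks K; exists (j * l + l)%N => k hk.
apply: le_trans (norm1_traj_le self_loop x v hk) _; apply: le_trans (contract j hj) _.
rewrite exprS -mulrA ler_wpM2l ?subr_ge0 ?col_bound_le1 // hK //.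
exact: leq_trans Kj (leq_pmulr j l_gt0).
Qed.

Lemma norm1_traj_cvg0 v : \sum_a v a = 0 -> norm1 (traj x v k) @[k --> \oo] --> 0.
Proof.
move=> /norm1_traj_decay decay.
apply/cvgrPdist_le => e e_gt0.
have N1_gt0 : 0 < norm1 v + 1 by have := norm1_ge0 v; lra.
have g_le1 := col_bound_le1.
have [r hr] := @expr_lt_eventually _ (1 - g) (e / (norm1 v + 1))
  ltac:(by rewrite subr_ge0 g_le1 ltrBlDr ltrDl) (divr_gt0 e_gt0 N1_gt0).
have [K hK] := decay r; exists K => // k /= /hK hk.
rewrite sub0r normrN ger0_norm ?norm1_ge0 //; apply: le_trans hk _.
apply: le_trans (_ : e / (norm1 v + 1) * norm1 v <= _).
  by rewrite ler_wpM2r ?norm1_ge0 ?ltW.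
by rewrite mulrAC ler_pdivrMr // ler_wpM2l ?(ltW e_gt0) // lerDl.
Qed.

Lemma ratio_cvg (y0 z0 : idx E -> R) (mu : R) :
  (forall a, 0 <= z0 a) -> 0 < mu -> mu <= g * \sum_a z0 a ->
  let s := fun k => mu <= traj x z0 k (inl i) in
  inf_often s /\
  (fun t => traj x y0 (tau s t) (inl i) / traj x z0 (tau s t) (inl i)) @ \oo -->
    (\sum_a y0 a) / (\sum_a z0 a).
Proof.
move=> z0_ge0 mu_gt0 mu_le s.
have z0_sum_neq0 : \sum_a z0 a != 0.
  by rewrite gt_eqF // -(pmulr_rgt0 _ g_gt0); apply: lt_le_trans mu_le.
have hits : inf_often s.
  move=> K; have [k [Kk hk]] := inf_often_traj_col_ge z0_ge0 K.
  by exists k; split => //; apply: le_trans mu_le hk.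
split => //; set pi := _ / _.
pose u0 a := y0 a - pi * z0 a.
have u0_sum : \sum_a u0 a = 0 by rewrite sumrB -mulr_sumr divfK ?subrr.
have /cvgrPdist_le/(_ (_ * mu) _) dev := norm1_traj_cvg0 u0_sum.
apply/cvgrPdist_le => e e_gt0.
have [K _ hK] := dev e (mulr_gt0 e_gt0 mu_gt0); exists K => // t /= Kt.
have [t_le hit] := tauP hits t; set k := tau s t in t_le hit *.
have zk_gt0 : 0 < traj x z0 k (inl i) by apply: lt_le_trans hit.
have uk_le : `|traj x u0 k (inl i)| <= e * mu.
  have := hK k (leq_trans Kt t_le); rewrite sub0r normrN ger0_norm ?norm1_ge0 //.
  exact/le_trans/(ler_sum_term (F := fun b => `|traj x u0 k b|)).
have -> : pi - traj x y0 k (inl i) / traj x z0 k (inl i) =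
    - (traj x u0 k (inl i) / traj x z0 k (inl i)).
  by rewrite trajBl; field; rewrite gt_eqF.
rewrite normrN normrM normfV (gtr0_norm zk_gt0) ler_pdivrMr //.
by apply: le_trans uk_le _; rewrite ler_wpM2l ?(ltW e_gt0).
Qed.

End RatioConsensus.

Section InfinitelyOften.
Variables (R : realType) (d : measure_display) (T : measurableType d).
Variables (P : probability T R) (G : nat -> set T) (p : R).
Hypothesis G_meas : forall j, measurable (G j).
Hypothesis G_indep : forall S, uniq S ->
  P (\bigcap_(j in [set` S]) G j) = (p ^+ size S)%:E.

Let bigcap_cons (F : nat -> set T) j (S : seq nat) :
  \bigcap_(k in [set` j :: S]) F k = F j `&` \bigcap_(k in [set` S]) F k.
Proof. by rewrite !bigcap_seq big_cons. Qed.

Let bigcap_seq_meas (F : nat -> set T) (S : seq nat) :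
  (forall j, measurable (F j)) -> measurable (\bigcap_(j in [set` S]) F j).
Proof. by move=> F_meas; rewrite bigcap_seq; apply: bigsetI_measurable. Qed.

Lemma measure_bigcap_compl (S F : seq nat) :
  uniq S -> uniq F -> (forall j, j \in F -> j \notin S) ->
  P (\bigcap_(j in [set` S]) G j `&` \bigcap_(j in [set` F]) ~` G j) =
    (p ^+ size S * (1 - p) ^+ size F)%:E.
Proof.
elim: F S => [|f F IH] S uS.
  by rewrite [X in _ `&` X]bigcap_seq big_nil setIT G_indep // mulr1.
move=> /andP[fF uF] dFS.
have fS : f \notin S by apply: dFS; rewrite mem_head.
have dFS' j : j \in F -> j \notin S by move=> jF; apply: dFS; rewrite inE jF orbT.
have dFfS j : j \in F -> j \notin f :: S.
  by move=> jF; rewrite inE negb_or dFS' // andbT; apply: contraTneq jF => ->.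
have mA := bigcap_seq_meas S G_meas.
have mB := bigcap_seq_meas F (fun j => measurableC (G_meas j)).
have : P (\bigcap_(j in [set` S]) G j `&` \bigcap_(j in [set` F]) ~` G j) =
    (P (\bigcap_(j in [set` S]) G j `&` \bigcap_(j in [set` f :: F]) ~` G j) +
     P (\bigcap_(j in [set` f :: S]) G j `&` \bigcap_(j in [set` F]) ~` G j))%E.
  apply: eq_trans (measureDI P (measurableI _ _ mA mB) (G_meas f)) _.
  by congr (P _ + P _)%E; rewrite bigcap_cons; apply/seteqP; split => w /=; tauto.
rewrite !IH /= ?fS ?uS // => h.
rewrite -[LHS](@addeK _ (p ^+ (size S).+1 * (1 - p) ^+ size F)%:E) // -h -EFinB.
by congr (_%:E); rewrite /= !exprS; ring.
Qed.

Hypotheses (p_gt0 : 0 < p) (p_le1 : p <= 1).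

Lemma measure_never_after J : P (\bigcap_(j in [set j | (J <= j)%N]) ~` G j) = 0.
Proof.
set NJ := \bigcap_(j in _) _.
have mNJ : measurable NJ by apply: bigcap_measurableType => j _; exact/measurableC.
have NJ_le N : (P NJ <= ((1 - p) ^+ N)%:E)%E.
  have := measure_bigcap_compl (S := [::]) isT (iota_uniq J N) (fun _ _ => isT).
  rewrite [X in X `&` _]bigcap_seq big_nil setTI size_iota expr0 mul1r => <-.
  apply: le_measure; rewrite ?inE //; first by apply: bigcap_seq_meas => j; apply: measurableC.
  by move=> w NJw j; rewrite /= mem_iota => /andP[/NJw].
have NJ_fin : P NJ = (fine (P NJ))%:E.
  by rewrite fineK // ge0_fin_numE ?measure_ge0 // (le_lt_trans (probability_le1 _ mNJ)) ?ltry.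
rewrite NJ_fin; congr (_%:E).
have NJ_ge0 : 0 <= fine (P NJ) by rewrite fine_ge0 ?measure_ge0.
apply/eqP; rewrite eq_le NJ_ge0 andbT leNgt; apply/negP => NJ_gt0.
have [N hN] := @expr_lt_eventually _ (1 - p) _ ltac:(by rewrite subr_ge0 p_le1 ltrBlDr ltrDl) NJ_gt0.
by have := NJ_le N; rewrite NJ_fin lee_fin => /(lt_le_trans hN); rewrite ltxx.
Qed.

Lemma inf_often_ae : {ae P, forall w, inf_often (G ^~ w)}.
Proof.
apply: (@negligibleS _ _ _ P (\bigcup_J \bigcap_(j in [set j | (J <= j)%N]) ~` G j)).
  move=> w /= /existsNP [J hJ]; exists J => // j Jj Gjw.
  by apply: hJ; exists j.
apply: negligible_bigcup => J; exists (\bigcap_(j in [set j | (J <= j)%N]) ~` G j).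
split=> //; last exact: measure_never_after.
by apply: bigcap_measurableType => j _; exact/measurableC.
Qed.

End InfinitelyOften.

Section ReliableBlocks.
Variable l : nat.
Hypothesis l_gt0 : (0 < l)%N.

Definition block_times (S : seq nat) := flatten [seq iota (j * l).+1 l | j <- S].

Lemma mem_block_times S t :
  t \in block_times S <-> exists j k, [/\ j \in S, (k < l)%N & t = (j * l + k).+1].
Proof.
split.
  move/flatten_mapP => [j hj]; rewrite mem_iota => /andP[h1 h2].
  by exists j, (t - (j * l).+1)%N; split => //; lia.
move=> [j [k [hj hk ->]]]; apply/flatten_mapP; exists j => //.
by rewrite mem_iota; apply/andP; split; lia.
Qed.

Lemma block_times_uniq S : uniq S -> uniq (block_times S).
Proof.
elim: S => [//|j S IH] /= /andP[jS uS].
rewrite cat_uniq iota_uniq IH // andbT; apply/hasPn => t /mem_block_times [j' [k [j'S hk ->]]].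
have : j' != j by apply: contraNneq jS => <-.
rewrite mem_iota; case: (ltngtP j' j) => // h _.
  have : (j'.+1 * l <= j * l)%N by rewrite leq_mul2r h orbT.
  by rewrite mulSn; lia.
have : (j.+1 * l <= j' * l)%N by rewrite leq_mul2r h orbT.
by rewrite mulSn; lia.
Qed.

Lemma size_block_times S : size (block_times S) = (size S * l)%N.
Proof. by elim: S => [//|j S IH] /=; rewrite size_cat size_iota IH mulSn. Qed.

Variables (R : realType) (d : measure_display) (T : measurableType d) (P : probability T R).
Variables (m : nat) (E : {set 'I_m * 'I_m}).
Variables (q : 'I_m * 'I_m -> R) (X : nat -> 'I_m * 'I_m -> T -> bool).
Hypothesis X_meas : forall k e, measurable [set w | X k e w].
Hypothesis X_prob : forall k e, (0 < k)%N -> e \in E -> P [set w | X k e w] = (q e)%:E.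
Hypothesis X_indep :
  mutually_independent P [set p : nat * ('I_m * 'I_m) | (0 < p.1)%N /\ p.2 \in E]
    (fun p => X p.1 p.2).

Let block_event j := [set w | reliable_block E (fun k e => X k e w) l j].

Let block_event_measurable j : measurable (block_event j).
Proof.
have -> : block_event j = \bigcap_(k in [set k | (k < l)%N])
    \bigcap_(e in [set e | e \in E]) [set w | X (j * l + k).+1 e w].
  by apply/seteqP; split => w h k hk e he; apply: h.
apply: bigcap_measurableType => k _; apply: fin_bigcap_measurable => // e _.
Qed.

Lemma measure_block_events (S : seq nat) : uniq S ->
  P (\bigcap_(j in [set` S]) block_event j) =
    (((\prod_(e <- enum E) q e) ^+ l) ^+ size S)%:E.
Proof.
move=> uS; set s := [seq (t, e) | t <- block_times S, e <- enum E].
have us : uniq s.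
  apply: allpairs_uniq; [exact: block_times_uniq | exact: enum_uniq |].
  by move=> [? ?] [? ?] _ _ [-> ->].
have s_in i : i \in s -> (0 < i.1)%N /\ i.2 \in E.
  move=> /allpairsP [[t e] [/mem_block_times [j [k [_ _ ->]]] he ->]].
  by rewrite mem_enum in he.
have := X_indep (fun _ => true) us s_in.
have -> : \bigcap_(i in [set` s]) [set w | X i.1 i.2 w = true] =
    \bigcap_(j in [set` S]) block_event j.
  apply/seteqP; split => w.
    move=> h j jS k hk e he; apply: (h ((j * l + k).+1, e)); apply/allpairsP.
    exists ((j * l + k).+1, e); rewrite mem_enum; split => //.
    by apply/mem_block_times; exists j, k.
  move=> h [t e] /allpairsP [[t' e'] [ht he [-> ->]]] /=.
  have [j [k [jS hk ->]]] := (mem_block_times S t').1 ht.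
  by apply: (h j jS k hk); rewrite mem_enum in he.
move=> ->; congr (_%:E); rewrite big_allpairs -exprM mulnC -size_block_times.
rewrite -prodr_const_seq; apply: eq_big_seq => t /mem_block_times [j [k [_ _ ->]]].
apply: eq_big_seq => e; rewrite mem_enum => eE.
by rewrite X_prob.
Qed.

Lemma reliable_blocks_ae : (forall e, e \in E -> 0 < q e <= 1) ->
  {ae P, forall w, inf_often (reliable_block E (fun k e => X k e w) l)}.
Proof.
move=> q_range.
have /andP[prod_gt0 prod_le1] : 0 < \prod_(e <- enum E) q e <= 1.
  rewrite big_seq; apply: (big_ind (fun v => 0 < v <= 1)) => [|u v|e].
  - by rewrite ltr01 lexx.
  - move=> /andP[u_gt0 u_le1] /andP[v_gt0 v_le1].
    by rewrite mulr_gt0 // mulr_ile1 // ltW.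
  - by rewrite mem_enum => /q_range.
apply: (inf_often_ae block_event_measurable measure_block_events).
  exact: exprn_gt0.
exact: exprn_ile1 (ltW prod_gt0) prod_le1.
Qed.

End ReliableBlocks.

Theorem theorem1 (R : realType) (d : measure_display) (T : measurableType d)
  (P : probability T R) (m : nat) (E : {set 'I_m * 'I_m})
  (q : 'I_m * 'I_m -> R) (X : nat -> 'I_m * 'I_m -> T -> bool)
  (y0 z0 : idx E -> R) (muz c : R) (l : nat) :
  (forall i : 'I_m, (i, i) \in E) ->
  (forall i j : 'I_m, connect (fun a b => (a, b) \in E) i j) ->
  (forall e, e \in E -> 0 < q e <= 1) ->
  (forall k e, measurable [set w | X k e w]) ->
  (forall k e, (0 < k)%N -> e \in E -> P [set w | X k e w] = (q e)%:E) ->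
  mutually_independent P [set p : nat * ('I_m * 'I_m) | (0 < p.1)%N /\ p.2 \in E]
    (fun p => X p.1 p.2) ->
  (forall i, 0 <= y0 (inl i)) -> (forall i, 0 <= z0 (inl i)) ->
  (forall e, y0 (inr e) = 0) -> (forall e, z0 (inr e) = 0) ->
  0 < \sum_j z0 j ->
  0 < muz -> muz <= \sum_j z0 j ->
  (exists x (a b : idx E), 0 < Mof R x a b /\ Mof R x a b = c) ->
  (forall x (a b : idx E), 0 < Mof R x a b -> c <= Mof R x a b) ->
  (0 < l)%N ->
  (forall i : 'I_m, exists s : seq (idx E -> idx E -> R),
     size s = l /\ (forall A, A \in s -> inMset (E:=E) A) /\
     forall a, 0 < mprod s a (inl i)) ->
  forall i : 'I_m,
  let mu := muz * c ^+ l / (#|{: idx E}|)%:R in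
  {ae P, forall w,
    let y := traj (fun k e => X k e w) y0 in
    let z := traj (fun k e => X k e w) z0 in
    let s := fun k => mu <= z k (inl i) in
    (forall K, exists k, (K <= k)%N /\ s k) /\
    (fun t => y (tau s t) (inl i) / z (tau s t) (inl i)) @ \oo -->
      (\sum_j y0 j) / (\sum_j z0 j)}.
Proof.
(* Strong connectivity only serves to guarantee the existence of l, which is
   assumed outright; y0 may be arbitrary. *)
move=> self_loop _ q_range X_meas X_prob X_indep _ z0_node _ z0_buffer _
  muz_gt0 muz_le [x0 [a0 [b0 [c_pos c_def]]]] c_min l_gt0 col_paths i mu.
have c_gt0 : 0 < c by rewrite -c_def.
have z0_ge0 a : 0 <= z0 a by case: a => [j|e]; rewrite ?z0_buffer.
have n_ge1 : (1 <= #|{: idx E}|)%N by apply/card_gt0P; exists (inl i).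
have mu_gt0 : 0 < mu by rewrite divr_gt0 ?mulr_gt0 ?exprn_gt0 ?ltr0n.
have mu_le : mu <= c ^+ l * \sum_a z0 a.
  rewrite /mu ler_pdivrMr ?ltr0n // mulrC -mulrA ler_wpM2l ?exprn_ge0 ?(ltW c_gt0) //.
  by rewrite -[muz]mulr1 ler_pM ?ler1n // ltW.
apply: filterS (reliable_blocks_ae l_gt0 X_meas X_prob X_indep q_range) => w blocks.
exact (ratio_cvg self_loop l_gt0 blocks (exprn_gt0 l c_gt0)
  (Mpow_col_ge self_loop c_gt0 c_min (col_paths i)) y0 z0_ge0 mu_gt0 mu_le).
Qed.
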